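(* Let $U$ be a regular region, let $\phi_h\in\Lambda^k_h$ be a solution of the localized discrete Euler--Lagrange equations on $U$, i.e. $dS_U[\phi_h]\cdot v=0$ for all admissible variations $v$ with respect to $U$, and let $V,W\in\mathfrak{X}(\Lambda^k_h)$ be first variations at $\phi_h$. Then $$d\Theta^h_U(\phi_h)\cdot(V,W)=0,$$ where $d$ is the exterior derivative on the finite-dimensional vector space $\Lambda^k_h$.
   Context: $X$ is a bounded $(n+1)$-dimensional polyhedral domain with a metric and finite element triangulation $\mathcal{T}_h$; $H\Lambda^m(X)$: square-integrable $m$-forms with square-integrable exterior derivative. A Lagrangian density $\mathcal{L}$ assigns to $(x,\phi,\psi)$, $\phi\in H\Lambda^k,\psi\in dH\Lambda^k$, an $(n+1)$-form; $j^1\phi=(x,\phi,d\phi)$; $S_U[\phi]=\int_U\mathcal{L}(j^1\phi)$. $\Lambda^k_h\subset H\Lambda^k$ is a finite element space (part of a subcomplex with cochain projections $\pi_h d=d\pi_h$) with a basis of locally supported shape functions associated to mesh nodes; $\mathring{\Lambda}^k_h$: elements with vanishing trace on $\partial X$. A node $i$ is interior to a region $U$ if $U$ contains all simplices touching $i$; $U$ is regular if it equals the union of all simplices touching its interior nodes; admissible variations w.r.t. regular $U$ are $v\in\mathring{\Lambda}^k_h$ with $v|_U$ having vanishing trace on $\partial U$. For $v\in\Lambda^k_h$ restricted to $U$, $v_\partial$ is the part of its expansion in the shape functions having nonzero trace on $\partial U$ and $v_{in}=v-v_\partial$. Vector fields $V\in\mathfrak{X}(\Lambda^k_h)$ are identified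 with maps $\Lambda^k_h\to\Lambda^k_h$, and $V_\partial(\phi):=(V(\phi))_\partial$. The discrete Cartan one-form on $\Lambda^k_h$ is $\Theta^h_U(\phi)\cdot V:=dS_U[\phi]\cdot V_\partial$. A first variation at $\phi_h$ is a vector field $B$ on $\Lambda^k_h$ whose flow preserves the discrete Euler--Lagrange equations, i.e. $d\big(dS_U[\cdot]\cdot A\big)(\phi_h)\cdot B=0$ for every vector field $A$ on $\Lambda^k_h$ taking values in the admissible variations with respect to $U$. *)

(* Abstract finite-dimensional model of the discrete (finite element) setting:
   Lambda^k_h is identified, through its basis of shape functions indexed by
   the N nodes, with the coordinate space 'rV[R]_N. *)
From HB Require Import structures.
From mathcomp Require Import all_boot all_order all_algebra.
From mathcomp Require Import all_classical all_reals all_analysis.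
Set Implicit Arguments.
Unset Strict Implicit.
Unset Printing Implicit Defensive.
Import Order.TTheory GRing.Theory Num.Theory.
Import numFieldNormedType.Exports.
Local Open Scope ring_scope.
Local Open Scope classical_set_scope.

Section FEdefs.
Variables (R : realType) (N : nat).
Notation E := 'rV[R]_N.

Definition dS (S : E -> R) (phi v : E) : R := 'D_v S phi.

(* v_partial : the part of the expansion of v in the shape functions whose
   index lies in [bnd], the set of shape functions with nonzero trace on dU. *)
Definition bdry_part (bnd : {set 'I_N}) (v : E) : E :=
  \row_j (if j \in bnd then v ord0 j else 0).

Definition in_part (bnd : {set 'I_N}) (v : E) : E := v - bdry_part bnd v.

Definition cartan (S : E -> R) (bnd : {set 'I_N}) (phi v : E) : R :=
  dS S phi (bdry_part bnd v).

(* exterior derivative of a one-form alpha on the vector space E, evaluated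
   on two tangent vectors v w at phi (constant-coefficient formula) *)
Definition ext_deriv1 (alpha : E -> E -> R) (phi v w : E) : R :=
  'D_v (fun psi => alpha psi w) phi - 'D_w (fun psi => alpha psi v) phi.

Definition C2 (S : E -> R) : Prop :=
  [/\ (forall x, differentiable S x),
      (forall v x, differentiable (fun y => 'D_v S y) x) &
      (forall v w, continuous (fun y => 'D_w (fun z => 'D_v S z) y))].

Definition lin_subspace (adm : E -> Prop) : Prop :=
  adm 0 /\ forall (a : R) (u v : E), adm u -> adm v -> adm (a *: u + v).

(* locality of S_U: any v with vanishing boundary part (v = v_in) agrees on U
   with an admissible variation a, and S_U does not see v - a. *)
Definition local_action (S : E -> R) (bnd : {set 'I_N}) (adm : E -> Prop) :=
  forall v : E, bdry_part bnd v = 0 ->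
    exists2 a : E, adm a & forall (psi : E) (t : R), S (psi + t *: (v - a)) = S psi.

Definition discrete_EL (S : E -> R) (adm : E -> Prop) (phi : E) : Prop :=
  forall v, adm v -> dS S phi v = 0.

Definition first_variation (S : E -> R) (adm : E -> Prop) (phi : E)
  (B : E -> E) : Prop :=
  forall A : E -> E, (forall x, differentiable A x) -> (forall x, adm (A x)) ->
    'D_(B phi) (fun psi => dS S psi (A psi)) phi = 0.

End FEdefs.

(** Locality of the action says that the Cartan form differs from [dS_U] by
    an admissible direction [a_w] that does not depend on the point:
    [Theta(psi).w = dS_U[psi].w - dS_U[psi].a_w].  Hence [dTheta(V, W)] is the
    antisymmetrised second derivative [D_v D_w S - D_w D_v S], which vanishes
    by the symmetry of second derivatives, plus the terms [D_w D_(a_v) S] and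
    [- D_v D_(a_w) S], which vanish because [V] and [W] are first variations
    tested against the constant admissible fields [a_v] and [a_w]. *)

From HB Require Import structures.
From mathcomp Require Import all_boot all_order all_algebra.
From mathcomp Require Import all_classical all_reals all_analysis.
From mathcomp Require Import ring.
Set Implicit Arguments.
Unset Strict Implicit.
Import Order.TTheory GRing.Theory Num.Theory.
Import numFieldNormedType.Exports.
Local Open Scope ring_scope.
Local Open Scope classical_set_scope.

Section DirectionalDerivatives.
Variables (R : realType) (V : normedModType R).
Implicit Types (F : V -> R) (x y c u w : V).

Lemma derive_line F x w (t : R) :
  'D_1 (fun s : R => F (x + s *: w)) t = 'D_w F (x + t *: w).
Proof.
rewrite /derive; set g1 := fun h => h^-1 *: _; set g2 := fun h => h^-1 *: _.
suff -> : g1 = g2 by [].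
by apply/funext => h; rewrite /g1 /g2 /= [h *: 1]mulr1 scalerDl addrCA addrC.
Qed.

Lemma derivable_line F x w (t : R) :
  derivable (fun s : R => F (x + s *: w)) t 1 = derivable F (x + t *: w) w.
Proof.
rewrite /derivable; set g1 := fun h => h^-1 *: _; set g2 := fun h => h^-1 *: _.
suff -> : g1 = g2 by [].
by apply/funext => h; rewrite /g1 /g2 /= [h *: 1]mulr1 scalerDl addrCA addrC.
Qed.

Lemma MVT_line F x w (h : R) : 0 < h -> (forall y, derivable F y w) ->
  exists2 t, 0 < t < h & F (x + h *: w) - F x = h * 'D_w F (x + t *: w).
Proof.
move=> h_gt0 dF.
have dline t : t \in `]0, h[%R ->
    is_derive t 1 (fun s : R => F (x + s *: w)) ('D_w F (x + t *: w)).
  by move=> _; apply: DeriveDef; rewrite ?derivable_line ?derive_line.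
have cline : {within `[0, h], continuous (fun s : R => F (x + s *: w))}.
  apply: continuous_subspaceT => t; apply: differentiable_continuous.
  by rewrite -derivable1_diffP derivable_line.
have [t t_in eqF] := MVT h_gt0 dline cline.
exists t; first by move: t_in; rewrite in_itv.
by move: eqF; rewrite scale0r addr0 subr0 mulrC.
Qed.

Lemma derive_shift F c y u : 'D_u (fun z => F (z + c)) y = 'D_u F (y + c).
Proof.
rewrite /derive; set g1 := fun h => h^-1 *: _; set g2 := fun h => h^-1 *: _.
by suff -> : g1 = g2 by []; apply/funext => h; rewrite /g1 /g2 /= addrA.
Qed.

Lemma derivable_shift F c y u :
  derivable (fun z => F (z + c)) y u = derivable F (y + c) u.
Proof.
rewrite /derivable; set g1 := fun h => h^-1 *: _; set g2 := fun h => h^-1 *: _.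
by suff -> : g1 = g2 by []; apply/funext => h; rewrite /g1 /g2 /= addrA.
Qed.

Lemma derive_eq0_of_line_cst F x u :
  (forall t : R, F (x + t *: u) = F x) -> 'D_u F x = 0.
Proof.
move=> Fcst; rewrite -(derive_cst (F x) x u) /derive.
set g1 := fun h => h^-1 *: _; set g2 := fun h => h^-1 *: _.
by suff -> : g1 = g2 by []; apply/funext => h; rewrite /g1 /g2 /= [h *: u + x]addrC Fcst.
Qed.

(* The mean value theorem twice: along [u] for [y |-> F (y + h w) - F y],
   then along [w] for ['D_u F]. *)
Lemma second_difference_MVT F u w x (h : R) : 0 < h ->
  (forall y u', derivable F y u') ->
  (forall y, derivable ('D_u F) y w) ->
  exists2 p, `|p - x| <= h * (`|u| + `|w|) &
    F (x + h *: u + h *: w) - F (x + h *: u) - F (x + h *: w) + F x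
    = h * (h * 'D_w ('D_u F) p).
Proof.
move=> h_gt0 dF dDF.
pose G y := F (y + h *: w) - F y.
have dG y : derivable G y u by apply: derivableB; rewrite ?derivable_shift.
have [s /andP[s_gt0 s_lt] eqG] := MVT_line x h_gt0 dG.
have DG : 'D_u G (x + s *: u)
          = 'D_u F (x + s *: u + h *: w) - 'D_u F (x + s *: u).
  by rewrite deriveB ?derivable_shift // derive_shift.
have [t /andP[t_gt0 t_lt] eqDF] := MVT_line (x + s *: u) h_gt0 dDF.
exists (x + s *: u + t *: w).
  rewrite addrAC [x + _]addrC addrK (le_trans (ler_normD _ _)) //.
  by rewrite !normrZ mulrDr lerD // ler_wpM2r // ger0_norm ?ltW.
by rewrite -eqDF -DG -eqG /G; ring.
Qed.

Lemma eq_of_close_coincidence (g1 g2 : V -> R) x :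
  {for x, continuous g1} -> {for x, continuous g2} ->
  (forall d : R, 0 < d ->
     exists p q, [/\ `|p - x| < d, `|q - x| < d & g1 p = g2 q]) ->
  g1 x = g2 x.
Proof.
move=> g1x g2x close; apply/eqP; rewrite -subr_eq0 -normr_le0.
apply/ler_addgt0Pr => e e_gt0; rewrite add0r.
have e2_gt0 : 0 < e / 2 by rewrite divr_gt0.
have /cvgrPdist_lt/(_ _ e2_gt0)/nbhs_normP[d1 d1_gt0 near1] := g1x.
have /cvgrPdist_lt/(_ _ e2_gt0)/nbhs_normP[d2 d2_gt0 near2] := g2x.
have [|p [q [px qx g12]]] := close (Num.min d1 d2); first by rewrite lt_min d1_gt0.
have g1p : `|g1 x - g1 p| < e / 2.
  by apply: near1; rewrite /ball_ /= distrC (lt_le_trans px) // ge_min lexx.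
have g2q : `|g2 x - g2 q| < e / 2.
  by apply: near2; rewrite /ball_ /= distrC (lt_le_trans qx) // ge_min lexx orbT.
have -> : g1 x - g2 x = (g1 x - g1 p) - (g2 x - g2 q) by rewrite g12; ring.
by rewrite (le_trans (ler_normB _ _)) // [e]splitr ltW // ltrD.
Qed.

Lemma derive2C F u w x :
  (forall y u', derivable F y u') ->
  (forall u' w' y, derivable ('D_u' F) y w') ->
  (forall u' w', continuous ('D_w' ('D_u' F))) ->
  'D_u ('D_w F) x = 'D_w ('D_u F) x.
Proof.
move=> dF dDF cDDF.
apply/esym/(eq_of_close_coincidence (cDDF u w x) (cDDF w u x)).
move=> d d_gt0; pose M := `|u| + `|w| + 1.
have M_gt0 : 0 < M by rewrite ltr_pwDr // addr_ge0.
pose h := d / M; have h_gt0 : 0 < h by rewrite divr_gt0.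
have hM : h * (`|u| + `|w|) < d.
  by rewrite -[ltRHS](divfK (lt0r_neq0 M_gt0)) -/h ltr_pM2l // ltrDl.
have [p px eqp] := second_difference_MVT x h_gt0 dF (dDF u w).
have [q qx eqq] := second_difference_MVT x h_gt0 dF (dDF w u).
exists p, q; split; [exact: le_lt_trans hM | | ].
  by rewrite (le_lt_trans qx) // addrC.
have h_neq0 : h != 0 by rewrite gt_eqF.
apply: (mulfI h_neq0); apply: (mulfI h_neq0); rewrite -eqp -eqq.
by rewrite [x + h *: w + h *: u]addrAC; ring.
Qed.

End DirectionalDerivatives.

Section CartanForm.
Variables (R : realType) (N : nat).
Implicit Types (S : 'rV[R]_N -> R) (w : 'rV[R]_N).

Lemma bdry_part_in_part (bnd : {set 'I_N}) w : bdry_part bnd (in_part bnd w) = 0.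
Proof.
by apply/rowP => j; rewrite /in_part /bdry_part !mxE; case: ifP => // ->; rewrite subrr.
Qed.

Lemma cartan_admissible_shift S bnd adm w :
  (forall x, differentiable S x) -> local_action S bnd adm ->
  exists2 a, adm a & forall psi, cartan S bnd psi w = 'D_w S psi - 'D_a S psi.
Proof.
move=> diffS loc; have [a adm_a Sinv] := loc _ (bdry_part_in_part bnd w).
exists a => // psi; rewrite /cartan /dS; set c := in_part bnd w - a.
have Dc0 : 'D_c S psi = 0 by apply: derive_eq0_of_line_cst; apply: Sinv.
have -> : bdry_part bnd w = w - c - a.
  by rewrite /c /in_part opprB addrA addrAC addrK opprB addrC subrK.
by clearbody c; rewrite deriveE // !linearB /= -!deriveE // Dc0 subr0.
Qed.

Lemma first_variation_cst S adm phi B a :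
  first_variation S adm phi B -> adm a -> 'D_(B phi) ('D_a S) phi = 0.
Proof. by move=> fB adm_a; apply: fB => [x|_] //; exact: differentiable_cst. Qed.

End CartanForm.

Theorem mainTheorem3 (R : realType) (N : nat) (S : 'rV[R]_N -> R)
  (bnd : {set 'I_N}) (adm : 'rV[R]_N -> Prop) (phi_h : 'rV[R]_N)
  (V W : 'rV[R]_N -> 'rV[R]_N) :
  C2 S -> lin_subspace adm -> local_action S bnd adm ->
  discrete_EL S adm phi_h ->
  first_variation S adm phi_h V -> first_variation S adm phi_h W ->
  ext_deriv1 (cartan S bnd) phi_h (V phi_h) (W phi_h) = 0.
Proof.
move=> [diffS diffDS contDDS] _ loc _ fV fW; rewrite /ext_deriv1.
have derS y u : derivable S y u by exact: diff_derivable.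
have derDS u w y : derivable ('D_u S) y w by exact: diff_derivable.
set v := V phi_h; set w := W phi_h.
have [aw aw_adm cartan_w] := cartan_admissible_shift w diffS loc.
have [av av_adm cartan_v] := cartan_admissible_shift v diffS loc.
have -> : (cartan S bnd)^~ w = 'D_w S - 'D_aw S by apply/funext => psi; rewrite cartan_w.
have -> : (cartan S bnd)^~ v = 'D_v S - 'D_av S by apply/funext => psi; rewrite cartan_v.
rewrite !(deriveB (derDS _ _ _) (derDS _ _ _)).
rewrite (first_variation_cst fV aw_adm) (first_variation_cst fW av_adm).
by rewrite (derive2C _ _ _ derS derDS contDDS) !subr0 subrr.
Qed.
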